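(* Let $\mathcal G$ be locally $\mathrm d$-finite and let $\mathcal L:\mathbb R^V\supset\mathrm{Dom}(\mathcal L)\to\mathbb R^V$ be a linear operator with $\mathcal C_{\mathrm{fs}}(\mathcal G)\subset\mathrm{Dom}(\mathcal L)$ that is bounded with respect to the sup-norm, semi-local, and a rough differential operator. Then ${}^{\mathcal O}\mathrm{Ric}_{\mathcal L}(x,y)$ is finite for all distinct $x,y\in V$.
   Context: $\mathcal G$ is a locally finite graph with vertex set $V$ and a distance $\mathrm d$ on $V$ with $(V,\mathrm d)$ complete; locally $\mathrm d$-finite means every $\mathrm d$-metric ball is a finite set. $\mathcal C_{\mathrm{fs}}(\mathcal G)$ = finitely supported functions; $\mathrm{Lip}(1)$ = functions with $|f(u)-f(v)|\le\mathrm d(u,v)$; $\nabla_{xy}f=(f(y)-f(x))/\mathrm d(x,y)$; ${}^{\mathcal O}\mathrm{Ric}_{\mathcal L}(x,y):=\inf\{\nabla_{yx}\mathcal Lf:\ f\in\mathcal C_{\mathrm{fs}}\cap\mathrm{Lip}(1),\ \nabla_{xy}f=1\}$. Bounded: there is $B>0$ with $\sup|\mathcal Lf|\le B\sup|f|$ for all $f\in\mathcal C_{\mathrm{fs}}$. Semi-local: there exist $R>0$ and $C_2>0$ such that for all $x$ and all $f\in\mathrm{Dom}(\mathcal L)\cap\mathrm{Lip}(1)$, $f|_{\mathcal B_R(x)}=0$ implies $\mathcal Lf(x)=0$, and $|\mathcal B_{2R}(x)|\le C_2$ for all $x$ ($\mathcal B_r(x)$ the $\mathrm d$-ball). Rough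 differential operator: $\mathcal L1=0$. *)

From Stdlib Require Import Reals List.
From Coquelicot Require Import Coquelicot.
Open Scope R_scope.

Definition is_metric {V : Type} (d : V -> V -> R) : Prop :=
  (forall x y, 0 <= d x y) /\
  (forall x y, d x y = 0 <-> x = y) /\
  (forall x y, d x y = d y x) /\
  (forall x y z, d x z <= d x y + d y z).

Definition metric_complete {V : Type} (d : V -> V -> R) : Prop :=
  forall u : nat -> V,
    (forall eps, 0 < eps -> exists N, forall m n, (N <= m)%nat -> (N <= n)%nat ->
        d (u m) (u n) < eps) ->
    exists l, forall eps, 0 < eps -> exists N, forall n, (N <= n)%nat -> d (u n) l < eps.

Definition ball_d {V : Type} (d : V -> V -> R) (x : V) (r : R) : V -> Prop :=
  fun y => d x y <= r.

Definition locally_d_finite {V : Type} (d : V -> V -> R) : Prop :=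
  forall x r, exists l : list V, forall y, ball_d d x r y -> In y l.

Definition locally_finite_graph {V : Type} (E : V -> V -> Prop) : Prop :=
  (forall x y, E x y -> E y x) /\ (forall x, ~ E x x) /\
  (forall x, exists l : list V, forall y, E x y -> In y l).

Definition fin_supp {V : Type} (f : V -> R) : Prop :=
  exists l : list V, forall v, ~ In v l -> f v = 0.

Definition Lip1 {V : Type} (d : V -> V -> R) (f : V -> R) : Prop :=
  forall u v, Rabs (f u - f v) <= d u v.

Definition nabla {V : Type} (d : V -> V -> R) (x y : V) (f : V -> R) : R :=
  (f y - f x) / d x y.

Definition linear_on {V : Type} (Dom : (V -> R) -> Prop) (L : (V -> R) -> (V -> R)) : Prop :=
  Dom (fun _ => 0) /\
  (forall f g, Dom f -> Dom g -> Dom (fun v => f v + g v)) /\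
  (forall a f, Dom f -> Dom (fun v => a * f v)) /\
  (forall f g, Dom f -> Dom g -> forall x, L (fun v => f v + g v) x = L f x + L g x) /\
  (forall a f, Dom f -> forall x, L (fun v => a * f v) x = a * L f x).

Definition sup_bounded {V : Type} (L : (V -> R) -> (V -> R)) : Prop :=
  exists B, 0 < B /\
    forall f, fin_supp f -> forall M, (forall v, Rabs (f v) <= M) ->
      forall x, Rabs (L f x) <= B * M.

Definition ball_card_le {V : Type} (d : V -> V -> R) (x : V) (r C : R) : Prop :=
  exists l : list V, NoDup l /\ (forall y, In y l <-> ball_d d x r y) /\
    INR (length l) <= C.

Definition semi_local {V : Type} (d : V -> V -> R) (Dom : (V -> R) -> Prop)
  (L : (V -> R) -> (V -> R)) : Prop :=
  exists Rr C2, 0 < Rr /\ 0 < C2 /\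
    (forall x f, Dom f -> Lip1 d f -> (forall y, ball_d d x Rr y -> f y = 0) -> L f x = 0) /\
    (forall x, ball_card_le d x (2 * Rr) C2).

Definition rough_diff_op {V : Type} (Dom : (V -> R) -> Prop) (L : (V -> R) -> (V -> R)) : Prop :=
  Dom (fun _ => 1) /\ forall x, L (fun _ => 1) x = 0.

Definition ORic {V : Type} (d : V -> V -> R) (L : (V -> R) -> (V -> R)) (x y : V) : Rbar :=
  Glb_Rbar (fun r => exists f, fin_supp f /\ Lip1 d f /\ nabla d x y f = 1 /\
                               r = nabla d y x (L f)).

(* A semi-local, sup-bounded operator with L 1 = 0 is uniformly bounded on
   finitely supported Lip(1) functions.  Given such an f and a vertex z,
   subtract f z (invisible to L since L 1 = 0) and clamp the result between
   +-max(0, 2R - d(z,.)).  The clamped function agrees with the original on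
   B_R(z), so by semi-locality L does not see the difference at z, yet it is
   finitely supported and bounded by 2R; hence |L f z| <= 2 B R.  Thus every
   quotient (L f x - L f y) / d(x,y) is at least -4 B R / d(x,y), and the tent
   max(0, d(x,y) - d(y,.)) shows that the infimum is over a nonempty set. *)

From Stdlib Require Import Reals List Lra FunctionalExtensionality.
From Coquelicot Require Import Coquelicot.
Open Scope R_scope.

Lemma Glb_Rbar_finite (S : R -> Prop) (r m : R) :
  S r -> (forall s, S s -> m <= s) -> is_finite (Glb_Rbar S).
Proof.
  intros Sr Hm.
  destruct (Glb_Rbar_correct S) as [Hlb Hglb].
  destruct (Glb_Rbar S) as [l| |].
  - reflexivity.
  - destruct (Hlb r Sr).
  - destruct (Hglb (Finite m) Hm).
Qed.

Definition clamp (p q : R) : R := Rmax (- q) (Rmin p q).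

Lemma clamp_id p q : Rabs p <= q -> clamp p q = p.
Proof.
  intros H; apply Rabs_le_between in H.
  unfold clamp, Rmax, Rmin; repeat destruct Rle_dec; lra.
Qed.

Lemma clamp_0 p : clamp p 0 = 0.
Proof. unfold clamp, Rmax, Rmin; repeat destruct Rle_dec; lra. Qed.

Lemma Rabs_clamp_le p q : 0 <= q -> Rabs (clamp p q) <= q.
Proof. intros; apply Rabs_le; unfold clamp, Rmax, Rmin; repeat destruct Rle_dec; lra. Qed.

Lemma Rabs_clamp_sub_le p q p' q' k :
  Rabs (p - p') <= k -> Rabs (q - q') <= k -> Rabs (clamp p q - clamp p' q') <= k.
Proof.
  intros H1 H2; apply Rabs_le_between in H1; apply Rabs_le_between in H2.
  apply Rabs_le; unfold clamp, Rmax, Rmin; repeat destruct Rle_dec; lra.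
Qed.

Section Lipschitz.
Context {V : Type} (d : V -> V -> R).
Hypothesis metric_d : is_metric d.

Lemma dist_pos_neq x y : x <> y -> 0 < d x y.
Proof.
  destruct metric_d as (dpos & dzero & _).
  intros Hxy; destruct (dpos x y) as [|H0]; auto.
  exfalso; apply Hxy, dzero; auto.
Qed.

Lemma Lip1_dist z : Lip1 d (d z).
Proof.
  destruct metric_d as (_ & _ & dsym & dtri).
  intros u v; apply Rabs_le.
  pose proof (dtri z u v); pose proof (dtri z v u); rewrite (dsym v u) in *; lra.
Qed.

Lemma Lip1_sub_const f c : Lip1 d f -> Lip1 d (fun v => f v - c).
Proof. intros Hf u v; replace (f u - c - (f v - c)) with (f u - f v) by ring; apply Hf. Qed.

Lemma Lip1_half_sub f g : Lip1 d f -> Lip1 d g -> Lip1 d (fun v => / 2 * (f v - g v)).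
Proof.
  intros Hf Hg u v.
  pose proof (proj1 (Rabs_le_between _ _) (Hf u v)).
  pose proof (proj1 (Rabs_le_between _ _) (Hg u v)).
  apply Rabs_le; lra.
Qed.

Lemma Lip1_clamp f g : Lip1 d f -> Lip1 d g -> Lip1 d (fun v => clamp (f v) (g v)).
Proof. intros Hf Hg u v; apply Rabs_clamp_sub_le; auto. Qed.

Definition tent (z : V) (r : R) (v : V) : R := Rmax 0 (r - d z v).

Lemma tent_ge0 z r v : 0 <= tent z r v.
Proof. apply Rmax_l. Qed.

Lemma tent_le z r v : 0 <= r -> tent z r v <= r.
Proof.
  destruct metric_d as (dpos & _).
  intros; unfold tent, Rmax; pose proof (dpos z v); destruct Rle_dec; lra.
Qed.

Lemma tent_out z r v : r < d z v -> tent z r v = 0.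
Proof. intros; unfold tent, Rmax; destruct Rle_dec; lra. Qed.

Lemma Lip1_tent z r : Lip1 d (tent z r).
Proof.
  intros u v; pose proof (proj1 (Rabs_le_between _ _) (Lip1_dist z u v)).
  apply Rabs_le; unfold tent, Rmax; repeat destruct Rle_dec; lra.
Qed.

Lemma fin_supp_outside_ball (f : V -> R) z r :
  locally_d_finite d -> (forall v, r < d z v -> f v = 0) -> fin_supp f.
Proof.
  intros Hfin Hf; destruct (Hfin z r) as [l Hl]; exists l; intros v Hv.
  apply Hf; destruct (Rle_lt_dec (d z v) r) as [Hle|]; auto.
  exfalso; exact (Hv (Hl v Hle)).
Qed.

End Lipschitz.

Section Operator.
Context {V : Type} (d : V -> V -> R) (Dom : (V -> R) -> Prop)
  (L : (V -> R) -> (V -> R)).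
Hypotheses (metric_d : is_metric d) (finite_balls : locally_d_finite d)
  (linear_L : linear_on Dom L) (Dom_fin_supp : forall f, fin_supp f -> Dom f)
  (rough_L : rough_diff_op Dom L).

Lemma Dom_sub f g : Dom f -> Dom g -> Dom (fun v => f v - g v).
Proof.
  destruct linear_L as (_ & Dadd & Dscale & _).
  intros Df Dg.
  replace (fun v => f v - g v) with (fun v => f v + (-1) * g v)
    by (apply functional_extensionality; intros; ring).
  auto.
Qed.

Lemma L_sub f g x : Dom f -> Dom g -> L (fun v => f v - g v) x = L f x - L g x.
Proof.
  destruct linear_L as (_ & _ & Dscale & Ladd & Lscale).
  intros Df Dg.
  replace (fun v => f v - g v) with (fun v => f v + (-1) * g v)
    by (apply functional_extensionality; intros; ring).
  rewrite Ladd, Lscale by auto; ring.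
Qed.

Lemma L_sub_const f c x : Dom f -> L (fun v => f v - c) x = L f x.
Proof.
  destruct linear_L as (_ & _ & Dscale & _ & Lscale); destruct rough_L as (D1 & L1).
  intros Df.
  replace (fun v => f v - c) with (fun v => f v - c * 1)
    by (apply functional_extensionality; intros; ring).
  rewrite L_sub, (Lscale c (fun _ => 1)), L1 by auto; ring.
Qed.

Lemma Dom_sub_const f c : Dom f -> Dom (fun v => f v - c).
Proof.
  destruct linear_L as (_ & _ & Dscale & _); destruct rough_L as (D1 & _).
  intros Df.
  replace (fun v => f v - c) with (fun v => f v - c * 1)
    by (apply functional_extensionality; intros; ring).
  apply Dom_sub; auto.
Qed.

Variable Rr : R.
Hypothesis L_local : forall x f, Dom f -> Lip1 d f ->
  (forall y, ball_d d x Rr y -> f y = 0) -> L f x = 0.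

(* Semi-locality only speaks about Lip(1) functions, hence the factor 1/2. *)
Lemma L_eq_on_ball z f g : Dom f -> Dom g -> Lip1 d f -> Lip1 d g ->
  (forall v, ball_d d z Rr v -> f v = g v) -> L f z = L g z.
Proof.
  destruct linear_L as (_ & _ & Dscale & _ & Lscale).
  intros Df Dg Hf Hg Hfg.
  assert (Hhalf : L (fun v => / 2 * (f v - g v)) z = 0).
  { apply L_local.
    - apply Dscale, Dom_sub; auto.
    - apply Lip1_half_sub; auto.
    - intros v Hv; rewrite Hfg by auto; ring. }
  rewrite (Lscale _ (fun v => f v - g v)), L_sub in Hhalf by (auto; apply Dom_sub; auto).
  lra.
Qed.

Hypothesis Rr_pos : 0 < Rr.
Variable B : R.
Hypothesis L_bounded : forall f, fin_supp f -> forall M, (forall v, Rabs (f v) <= M) ->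
  forall x, Rabs (L f x) <= B * M.

Lemma Rabs_L_Lip1_le z f : fin_supp f -> Lip1 d f -> Rabs (L f z) <= B * (2 * Rr).
Proof.
  destruct metric_d as (_ & _ & dsym & _).
  intros Hf Lf.
  set (F := fun v => f v - f z).
  set (g := fun v => clamp (F v) (tent d z (2 * Rr) v)).
  assert (LipF : Lip1 d F) by apply Lip1_sub_const, Lf.
  assert (DF : Dom F) by (apply Dom_sub_const; auto).
  assert (fin_g : fin_supp g).
  { apply (fin_supp_outside_ball d _ z (2 * Rr)); auto.
    intros v Hv; unfold g; rewrite tent_out by auto; apply clamp_0. }
  assert (LFg : L F z = L g z).
  { apply L_eq_on_ball; auto.
    - apply Lip1_clamp; auto; apply Lip1_tent; auto.
    - intros v Hv; unfold g; rewrite clamp_id; auto.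
      unfold ball_d in Hv; unfold tent.
      apply (Rle_trans _ (d z v)).
      + rewrite dsym; apply Lf.
      + eapply Rle_trans; [|apply Rmax_r]; lra. }
  rewrite <- (L_sub_const f (f z)) by auto; fold F; rewrite LFg.
  apply L_bounded; auto.
  intros v; eapply Rle_trans; [apply Rabs_clamp_le, tent_ge0|apply tent_le; auto; lra].
Qed.

End Operator.

Lemma nabla_ge_of_Rabs_le V (d : V -> V -> R) (g : V -> R) x y M :
  is_metric d -> 0 < d x y -> (forall z, Rabs (g z) <= M) ->
  - (2 * M) / d x y <= nabla d y x g.
Proof.
  intros (_ & _ & dsym & _) Hxy Hg; unfold nabla; rewrite (dsym y x).
  pose proof (proj1 (Rabs_le_between _ _) (Hg x)).
  pose proof (proj1 (Rabs_le_between _ _) (Hg y)).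
  unfold Rdiv; apply Rmult_le_compat_r; [left; apply Rinv_0_lt_compat|]; lra.
Qed.

Lemma nabla_tent V (d : V -> V -> R) x y :
  is_metric d -> 0 < d x y -> nabla d x y (tent d y (d x y)) = 1.
Proof.
  intros (_ & dzero & dsym & _) Hxy; unfold nabla, tent.
  rewrite (dsym y x), (proj2 (dzero y y) eq_refl), Rminus_0_r, Rminus_diag.
  rewrite Rmax_right, Rmax_left by lra.
  field; lra.
Qed.

Theorem mainTheorem15 (V : Type) (E : V -> V -> Prop) (d : V -> V -> R)
  (Dom : (V -> R) -> Prop) (L : (V -> R) -> (V -> R)) :
  is_metric d -> metric_complete d -> locally_finite_graph E ->
  locally_d_finite d ->
  linear_on Dom L ->
  (forall f, fin_supp f -> Dom f) ->
  sup_bounded L -> semi_local d Dom L -> rough_diff_op Dom L ->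
  forall x y : V, x <> y -> is_finite (ORic d L x y).
Proof.
  intros Hm _ _ Hfin Hlin Hfs [B [_ HB]] [Rr [_ [HR [_ [Hloc _]]]]] Hrough x y Hxy.
  assert (dxy : 0 < d x y) by (apply dist_pos_neq; auto).
  apply (Glb_Rbar_finite _ (nabla d y x (L (tent d y (d x y)))) (- (2 * (B * (2 * Rr))) / d x y)).
  - exists (tent d y (d x y)); repeat split; auto using Lip1_tent, nabla_tent.
    apply (fin_supp_outside_ball d _ y (d x y)); auto using tent_out.
  - intros r [f [Hf [Lf [_ ->]]]].
    apply nabla_ge_of_Rabs_le; auto.
    intros z; apply (Rabs_L_Lip1_le d Dom L); auto.
Qed.
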